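(* Let $P$ be a poset and let $\mathcal{U}_1\subseteq\mathcal{U}_2\subseteq\mathcal{U}_3$ be frame-generating join-specifications for $P$. For $k\in\{1,2,3\}$ let $\eta_k:P\to\mathcal{I}_{\mathcal{U}_k}$ be $p\mapsto p^\downarrow$. Then there are frame morphisms $\phi_1:\mathcal{I}_{\mathcal{U}_1}\to\mathcal{I}_{\mathcal{U}_2}$, $\phi_2:\mathcal{I}_{\mathcal{U}_2}\to\mathcal{I}_{\mathcal{U}_3}$ and $\phi:\mathcal{I}_{\mathcal{U}_1}\to\mathcal{I}_{\mathcal{U}_3}$ with $\phi=\phi_2\circ\phi_1$, $\phi_1\circ\eta_1=\eta_2$, $\phi_2\circ\eta_2=\eta_3$ and $\phi\circ\eta_1=\eta_3$; moreover $\phi_1,\phi_2,\phi$ are the unique frame morphisms satisfying these respective equations with the $\eta$ maps.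
   Context: A join-specification for $P$ is a set $\mathcal{U}\subseteq\wp(P)$ such that $\bigvee S$ exists in $P$ for every $S\in\mathcal{U}$ and $\{p\}\in\mathcal{U}$ for every $p\in P$. A $\mathcal{U}$-ideal is a down-closed $C\subseteq P$ with $\bigvee S\in C$ whenever $S\in\mathcal{U}$, $S\subseteq C$; $\mathcal{I}_{\mathcal{U}}$ is the complete lattice of $\mathcal{U}$-ideals under inclusion; $\mathcal{U}$ is frame-generating if $\mathcal{I}_{\mathcal{U}}$ is a frame. A frame morphism is a lattice homomorphism preserving arbitrary joins. *)

From Stdlib Require Import Classical.
Set Implicit Arguments.

Record Poset := {
  carrier :> Type;
  le : carrier -> carrier -> Prop;
  le_refl : forall x, le x x;
  le_trans : forall x y z, le x y -> le y z -> le x z;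
  le_anti : forall x y, le x y -> le y x -> x = y
}.

Section Defs.
Variable P : Poset.

Definition subset (A B : P -> Prop) := forall x, A x -> B x.

Definition is_join (S : P -> Prop) (j : P) : Prop :=
  (forall x, S x -> le P x j) /\ (forall u, (forall x, S x -> le P x u) -> le P j u).

Definition join_spec (U : (P -> Prop) -> Prop) : Prop :=
  (forall S, U S -> exists j, is_join S j) /\ (forall p : P, U (fun x => x = p)).

Definition is_U_ideal (U : (P -> Prop) -> Prop) (C : P -> Prop) : Prop :=
  (forall x y, le P x y -> C y -> C x) /\
  (forall S j, U S -> subset S C -> is_join S j -> C j).

(** The lattice I_U of U-ideals (ordered by inclusion). *)
Definition Ideal (U : (P -> Prop) -> Prop) := {C : P -> Prop | is_U_ideal U C}.

Variable U : (P -> Prop) -> Prop.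

Lemma meet_ideal (A B : Ideal U) :
  is_U_ideal U (fun x => proj1_sig A x /\ proj1_sig B x).
Proof.
  destruct A as [A [HA1 HA2]], B as [B [HB1 HB2]]; simpl; split.
  - intros x y Hxy [Ha Hb]; split; eauto.
  - intros S j HS Hsub Hj; split;
      [apply (HA2 S j HS) | apply (HB2 S j HS)]; auto;
      intros x Hx; apply Hsub; auto.
Qed.

Definition imeet (A B : Ideal U) : Ideal U := exist _ _ (meet_ideal A B).

Lemma join_ideal (F : Ideal U -> Prop) :
  is_U_ideal U (fun x => forall C : Ideal U,
       (forall A, F A -> subset (proj1_sig A) (proj1_sig C)) -> proj1_sig C x).
Proof.
  split.
  - intros x y Hxy Hy C HC. destruct C as [C [HC1 HC2]]; simpl in *.
    apply (HC1 x y Hxy). exact (Hy (exist _ C (conj HC1 HC2)) HC).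
  - intros S j HS Hsub Hj C HC. destruct C as [C [HC1 HC2]]; simpl in *.
    apply (HC2 S j HS); auto.
    intros x Hx. exact (Hsub x Hx (exist _ C (conj HC1 HC2)) HC).
Qed.

Definition ijoin (F : Ideal U -> Prop) : Ideal U := exist _ _ (join_ideal F).

Definition ijoin2 (A B : Ideal U) : Ideal U := ijoin (fun C => C = A \/ C = B).

(** U is frame-generating: I_U is a frame (infinite distributive law). *)
Definition frame_generating : Prop :=
  forall (a : Ideal U) (F : Ideal U -> Prop),
    imeet a (ijoin F) = ijoin (fun c => exists b, F b /\ c = imeet a b).

Lemma down_ideal (p : P) : is_U_ideal U (fun x => le P x p).
Proof.
  split.
  - intros x y Hxy Hy; eapply le_trans; eauto.
  - intros S j _ Hsub [_ Hj]. apply Hj. exact Hsub.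
Qed.

Definition eta (p : P) : Ideal U := exist _ _ (down_ideal p).

End Defs.
Arguments Ideal {P} U.
Arguments imeet {P U}.
Arguments ijoin {P U}.
Arguments ijoin2 {P U}.
Arguments eta {P} U p.
Arguments frame_generating {P} U.
Arguments join_spec {P} U.

Definition frame_morphism (P : Poset) (U V : (P -> Prop) -> Prop)
  (f : Ideal U -> Ideal V) : Prop :=
  (forall a b, f (imeet a b) = imeet (f a) (f b)) /\
  (forall a b, f (ijoin2 a b) = ijoin2 (f a) (f b)) /\
  (forall F : Ideal U -> Prop,
      f (ijoin F) = ijoin (fun c => exists a, F a /\ c = f a)).

(** Every [U]-ideal is the join in [I_U] of the principal ideals [a^↓] of its
    elements, so a join-preserving map out of [I_U] is determined by what it
    does to principal ideals.  This gives uniqueness.  It also gives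
    [phi = phi2 ∘ phi1], because the composite is again a frame morphism that
    fixes principal ideals.  For existence, send a [U]-ideal to the [V]-ideal it
    generates.  When [U ⊆ V], every [V]-ideal is also a [U]-ideal, and that
    makes the map preserve joins.  It also preserves binary meets, because
    distributivity in [I_V] writes the meet of the extensions of [A] and [B]
    as a join of ideals [a^↓ ∧ b^↓], each contained in [A ∩ B]. *)

From Stdlib Require Import FunctionalExtensionality PropExtensionality ProofIrrelevance.

Section IdealFrames.
Context {P : Poset}.
Implicit Types U V W : (P -> Prop) -> Prop.

Lemma ideal_subset_antisym {U} (C D : Ideal U) :
  subset P (proj1_sig C) (proj1_sig D) -> subset P (proj1_sig D) (proj1_sig C) -> C = D.
Proof.
  intros HCD HDC. apply eq_sig_hprop; [intros; apply proof_irrelevance |].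
  apply functional_extensionality; intro x.
  apply propositional_extensionality; split; auto.
Qed.

Lemma ideal_down_closed {U} (C : Ideal U) {x y} :
  le P x y -> proj1_sig C y -> proj1_sig C x.
Proof. apply (proj1 (proj2_sig C)). Qed.

Lemma ideal_weaken {U V} {C : P -> Prop} :
  (forall S, U S -> V S) -> is_U_ideal P V C -> is_U_ideal P U C.
Proof.
  intros HUV [Hdown Hjoin]. split; [exact Hdown |].
  intros S j HS. apply Hjoin, HUV, HS.
Qed.

Lemma ijoin_ext {U} (F G : Ideal U -> Prop) : (forall C, F C <-> G C) -> ijoin F = ijoin G.
Proof.
  intro HFG. f_equal.
  apply functional_extensionality; intro C. apply propositional_extensionality, HFG.
Qed.

Lemma ijoin_ub {U} {F : Ideal U -> Prop} (C : Ideal U) :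
  F C -> subset P (proj1_sig C) (proj1_sig (ijoin F)).
Proof. intros HC x Hx D HD. exact (HD C HC x Hx). Qed.

Lemma ijoin_least {U} {F : Ideal U -> Prop} (D : Ideal U) :
  (forall C, F C -> subset P (proj1_sig C) (proj1_sig D)) ->
  subset P (proj1_sig (ijoin F)) (proj1_sig D).
Proof. intros HD x Hx. exact (Hx D HD). Qed.

Lemma imeet_ijoin_least {U} {a : Ideal U} {F : Ideal U -> Prop} {D : Ideal U} :
  frame_generating U ->
  (forall b, F b -> forall x, proj1_sig a x -> proj1_sig b x -> proj1_sig D x) ->
  forall x, proj1_sig a x -> proj1_sig (ijoin F) x -> proj1_sig D x.
Proof.
  intros FG HD x Hax HFx.
  assert (Hx : proj1_sig (imeet a (ijoin F)) x) by (split; assumption).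
  rewrite FG in Hx. clear Hax HFx. revert x Hx. apply ijoin_least.
  intros _ [b [Hb ->]] x [Hax Hbx]. exact (HD b Hb x Hax Hbx).
Qed.

Lemma ijoin_morph_ijoin2 {U V} (f : Ideal U -> Ideal V) :
  (forall F, f (ijoin F) = ijoin (fun c => exists a, F a /\ c = f a)) ->
  forall a b, f (ijoin2 a b) = ijoin2 (f a) (f b).
Proof.
  intros Hf a b. unfold ijoin2. rewrite Hf. apply ijoin_ext; intro c; split.
  - intros [d [[-> | ->] ->]]; auto.
  - intros [-> | ->]; eauto.
Qed.

Lemma frame_morphism_comp {U V W} {f : Ideal U -> Ideal V} {g : Ideal V -> Ideal W} :
  frame_morphism f -> frame_morphism g -> frame_morphism (fun C => g (f C)).
Proof.
  intros [fM [fJ2 fJ]] [gM [gJ2 gJ]]. split; [| split].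
  - intros a b. rewrite fM, gM. reflexivity.
  - intros a b. rewrite fJ2, gJ2. reflexivity.
  - intro F. rewrite fJ, gJ. apply ijoin_ext; intro c; split.
    + intros [_ [[a [Ha ->]] ->]]. eauto.
    + intros [a [Ha ->]]. eauto.
Qed.

Definition principals V (A : P -> Prop) : Ideal V -> Prop :=
  fun C => exists a, A a /\ C = eta V a.

Definition generated V (A : P -> Prop) : Ideal V := ijoin (principals V A).

Lemma generated_incl V (A : P -> Prop) : subset P A (proj1_sig (generated V A)).
Proof.
  intros a Ha. apply (ijoin_ub (eta V a)); [exists a; auto | apply le_refl].
Qed.

Lemma generated_least V (A : P -> Prop) (C : Ideal V) :
  subset P A (proj1_sig C) -> subset P (proj1_sig (generated V A)) (proj1_sig C).
Proof.
  intro HAC. apply ijoin_least.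
  intros _ [a [Ha ->]] x Hxa. exact (ideal_down_closed C Hxa (HAC a Ha)).
Qed.

Lemma generated_ideal {U} (C : Ideal U) : generated U (proj1_sig C) = C.
Proof.
  apply ideal_subset_antisym.
  - apply generated_least. intros x Hx. exact Hx.
  - apply generated_incl.
Qed.

Definition extend {U} V (C : Ideal U) : Ideal V := generated V (proj1_sig C).

Lemma extend_eta {U V} (p : P) : extend V (eta U p) = eta V p.
Proof.
  apply ideal_subset_antisym.
  - apply generated_least. intros x Hx. exact Hx.
  - intros x Hxp. apply (ideal_down_closed _ Hxp), generated_incl, le_refl.
Qed.

Lemma extend_ijoin {U V} (F : Ideal U -> Prop) :
  (forall S, U S -> V S) ->
  extend V (ijoin F) = ijoin (fun c => exists a, F a /\ c = extend V a).
Proof.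
  intro HUV. apply ideal_subset_antisym.
  - set (J := ijoin (fun c => exists a, F a /\ c = extend V a)).
    set (JU := exist _ (proj1_sig J) (ideal_weaken HUV (proj2_sig J)) : Ideal U).
    apply generated_least, (ijoin_least JU).
    intros C HC x Hx.
    apply (ijoin_ub (extend V C)); [exists C; auto | apply generated_incl, Hx].
  - apply ijoin_least. intros _ [C [HC ->]].
    apply generated_least. intros x Hx. apply generated_incl, (ijoin_ub C HC x Hx).
Qed.

Lemma extend_imeet {U V} (C D : Ideal U) :
  frame_generating V -> extend V (imeet C D) = imeet (extend V C) (extend V D).
Proof.
  intro FG. apply ideal_subset_antisym.
  - apply generated_least. intros x [HCx HDx]. split; apply generated_incl; assumption.
  - intros x [HCx HDx].
    apply (imeet_ijoin_least (a := extend V C) (F := principals V (proj1_sig D)) FG); [| exact HCx | exact HDx].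
    intros _ [d [Hd ->]] y HCy Hyd.
    apply (imeet_ijoin_least (a := eta V d) (F := principals V (proj1_sig C)) FG); [| exact Hyd | exact HCy].
    intros _ [c [Hc ->]] z Hzd Hzc.
    apply generated_incl. split; [exact (ideal_down_closed C Hzc Hc) | exact (ideal_down_closed D Hzd Hd)].
Qed.

Lemma extend_frame_morphism {U V} :
  (forall S, U S -> V S) -> frame_generating V -> frame_morphism (@extend U V).
Proof.
  intros HUV FG. split; [| split].
  - intros a b. apply extend_imeet, FG.
  - apply ijoin_morph_ijoin2. intro F. apply extend_ijoin, HUV.
  - intro F. apply extend_ijoin, HUV.
Qed.

Lemma extend_unique {U V} {psi : Ideal U -> Ideal V} :
  frame_morphism psi -> (forall p, psi (eta U p) = eta V p) ->
  forall C, psi C = extend V C.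
Proof.
  intros [_ [_ Hjoin]] Heta C.
  rewrite <- (generated_ideal C) at 1. unfold generated at 1.
  rewrite Hjoin. apply ijoin_ext; intro E; split.
  - intros [_ [[a [Ha ->]] ->]]. exists a. auto.
  - intros [a [Ha ->]]. exists (eta U a). split; [exists a |]; auto.
Qed.

End IdealFrames.

Theorem lemma4p1 (P : Poset) (U1 U2 U3 : (P -> Prop) -> Prop) :
  join_spec U1 -> join_spec U2 -> join_spec U3 ->
  (forall S, U1 S -> U2 S) -> (forall S, U2 S -> U3 S) ->
  frame_generating U1 -> frame_generating U2 -> frame_generating U3 ->
  exists (phi1 : Ideal U1 -> Ideal U2) (phi2 : Ideal U2 -> Ideal U3)
         (phi : Ideal U1 -> Ideal U3),
    frame_morphism phi1 /\ frame_morphism phi2 /\ frame_morphism phi /\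
    (forall A, phi A = phi2 (phi1 A)) /\
    (forall p : P, phi1 (eta U1 p) = eta U2 p) /\
    (forall p : P, phi2 (eta U2 p) = eta U3 p) /\
    (forall p : P, phi (eta U1 p) = eta U3 p) /\
    (forall psi : Ideal U1 -> Ideal U2, frame_morphism psi ->
       (forall p : P, psi (eta U1 p) = eta U2 p) -> forall A, psi A = phi1 A) /\
    (forall psi : Ideal U2 -> Ideal U3, frame_morphism psi ->
       (forall p : P, psi (eta U2 p) = eta U3 p) -> forall A, psi A = phi2 A) /\
    (forall psi : Ideal U1 -> Ideal U3, frame_morphism psi ->
       (forall p : P, psi (eta U1 p) = eta U3 p) -> forall A, psi A = phi A).
Proof.
  intros _ _ _ H12 H23 _ FG2 FG3.
  pose proof (extend_frame_morphism H12 FG2) as M12.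
  pose proof (extend_frame_morphism H23 FG3) as M23.
  assert (M13 : frame_morphism (@extend P U1 U3)).
  { apply extend_frame_morphism; auto. }
  exists (extend U2), (extend U3), (extend U3).
  repeat match goal with |- _ /\ _ => split end.
  1-3: assumption.
  { intro A. symmetry. refine (extend_unique (frame_morphism_comp M12 M23) _ A).
    intro p. rewrite !extend_eta. reflexivity. }
  1-3: intro p; apply extend_eta.
  all: intros psi Hpsi Heta; exact (extend_unique Hpsi Heta).
Qed.
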